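(* For every $v\in\mathbb Q$, the following are equivalent: (1) $v\in\mathcal V$; (2) $v\in\mathbb Z_{d,\ell}$, $v\geq-\mu_\kappa$, and $v\in\mathcal V_{\iota(v)}$ where $\iota(v)=\left\lfloor (n+1)\frac{v+\mu_\kappa}{\tau}+h(v)\right\rfloor$.
   Context: Let $\mathbf K$ be a field and $\ell\geq 2$ an integer. Let $L=a_n\phi_\ell^n+\dots+a_0$ with $n\geq1$, $a_i\in\mathbf K[z]$, $a_0a_n\neq0$, where $\phi_\ell(f)(z)=f(z^\ell)$ acting on Hahn series with coefficients in $\mathbf K$ and value group $\mathbb Q$. Let $\mathcal P(L)=\{(\ell^i,j): 0\le i\le n,\ j\in\operatorname{supp} a_i\}$. The Newton polygon of $L$ is the convex hull of $\{(\ell^i,j): 0\le i\le n,\ j\geq\operatorname{val} a_i\}\subset\mathbb R^2$; its non-vertical edges have slopes $\mu_1<\dots<\mu_\kappa$, $\mathcal S(L)=\{\mu_1,\dots,\mu_\kappa\}$. Let $d\geq1$ be a common multiple of the denominators of the $\mu_k$; $\mathbb Z_{d,\ell}=\bigcup_{i\geq0}\frac{1}{d\ell^i}\mathbb Z$, and $h(v)=\min\{i\geq0: v\in\frac1{d\ell^i}\mathbb Z\}$ for $v\in\mathbb Z_{d,\ell}$. Define $\Psi(v)=\{v\ell^i+j:(\ell^i,j)\in\mathcal P(L)\}$, $\pi(q)=\max\{(q-j)/\ell^i:(\ell^i,j)\in\mathcal P(L)\}$. Let $\mathcal V_0=-\mathcal S(L)$, $\mathcal V_{i+1}=\bigcup_{v\in\mathcal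 V_i}\pi(\Psi(v))$, $\mathcal V=\bigcup_{i\ge0}\mathcal V_i$ (a well-ordered set). For $v\in\mathbb Q$ let $\epsilon(v)=\min\{w\in\mathcal V: w>v\}-v\in\mathbb Q_{>0}\cup\{+\infty\}$ ($+\infty$ if this set is empty), and $\tau=\min\{\epsilon(-\mu_1),\dots,\epsilon(-\mu_\kappa),(d\ell^n)^{-1}\}\in\mathbb Q_{>0}$. *)

From HB Require Import structures.
From mathcomp Require Import all_boot all_order all_algebra.
Set Implicit Arguments. Unset Strict Implicit. Unset Printing Implicit Defensive.
Import Order.TTheory GRing.Theory Num.Theory.
Local Open Scope ring_scope.

Section Defs.
Variables (K : fieldType) (l n : nat) (a : nat -> {poly K}).

(* valuation of a polynomial: index of its first nonzero coefficient
   (only used for a_i <> 0) *)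
Definition pval (p : {poly K}) : nat := find (fun c => c != 0) p.

(* (l^i, j) \in P(L), encoded by the pair (i, j) *)
Definition inP (i j : nat) : bool := (i <= n)%N && ((a i)`_j != 0).

Definition Pseq : seq (nat * nat) :=
  flatten [seq [seq (i, j) | j <- iota 0 (size (a i)) & (a i)`_j != 0] | i <- iota 0 n.+1].

(* pi(q) = max { (q - j) / l^i : (l^i, j) \in P(L) }.  The start value
   (q - val a_0) / l^0 is itself one of the terms since a_0 <> 0. *)
Definition piL (q : rat) : rat :=
  foldr (fun p m => Num.max m ((q - (p.2)%:R) / ((l ^ p.1)%N)%:R))
        (q - (pval (a 0))%:R) Pseq.

(* mu is the slope of a non-vertical edge of the Newton polygon, i.e. the
   lower convex hull of the points (l^m, val a_m) (a_m <> 0): the supporting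
   line of slope mu touches at least two of these points. *)
Definition isSlope (mu : rat) : Prop :=
  exists i k : nat, [/\ (i < k)%N, (k <= n)%N, a i != 0 /\ a k != 0,
    (pval (a i))%:R - mu * ((l ^ i)%N)%:R = (pval (a k))%:R - mu * ((l ^ k)%N)%:R
    & forall m : nat, (m <= n)%N -> a m != 0 ->
        (pval (a i))%:R - mu * ((l ^ i)%N)%:R <= (pval (a m))%:R - mu * ((l ^ m)%N)%:R].

Definition isMaxSlope (mu : rat) : Prop :=
  isSlope mu /\ forall mu', isSlope mu' -> mu' <= mu.

Fixpoint inVi (i : nat) (w : rat) : Prop :=
  match i with
  | 0 => isSlope (- w)
  | i'.+1 => exists v : rat, inVi i' v /\
      exists e j : nat, inP e j /\ w = piL (v * ((l ^ e)%N)%:R + j%:R)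
  end.

Definition inV (w : rat) : Prop := exists i : nat, inVi i w.

Definition nextV (v w : rat) : Prop :=
  [/\ inV w, v < w & forall u, inV u -> v < u -> w <= u].

(* t = tau = min(eps(-mu_1), ..., eps(-mu_kappa), 1/(d l^n)), where
   eps(v) = nextV v - v, or +oo (dropped from the min) if no element of V
   exceeds v. *)
Definition isTau (d : nat) (t : rat) : Prop :=
  [/\ t <= (((d * l ^ n)%N)%:R)^-1,
      (forall mu w, isSlope mu -> nextV (- mu) w -> t <= w + mu) &
      (t = (((d * l ^ n)%N)%:R)^-1 \/
       exists mu w, [/\ isSlope mu, nextV (- mu) w & t = w + mu])].

End Defs.

Definition inZi (d l i : nat) (v : rat) : bool :=
  (v * ((d * l ^ i)%N)%:R) \is a Num.int.

Definition inZdl (d l : nat) (v : rat) : Prop := exists i : nat, inZi d l i v.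

Definition isH (d l : nat) (v : rat) (h : nat) : Prop :=
  inZi d l h v /\ forall i : nat, (i < h)%N -> ~~ inZi d l i v.

(* Everything in V lies in Z_{d,l} (once its maximiser is fixed, v |-> pi(v l^e + j) is
   affine with a power of l as denominator) and above -mu_kappa (since pi(v l^e + j) >= v).
   For the index, follow a derivation v_0 in V_0, v_(k+1) = pi(v_k l^e + j) and watch
   B(v) = (n+1)(v + mu_kappa)/tau + h(v): it is nonnegative on V and grows by at least 1 at
   every step that moves the value.  If h does not grow, then either both values lie in
   (1/(d l^n))Z, or the maximiser (l^e', j') defining the new value w lies strictly left of
   (l^e, j) on the Newton polygon; the edge leaving that vertex to the right has a slope s
   with -s <= w, and the gap tau <= eps(-s) gives w - v >= tau.  The gap needs V to be well
   ordered, which holds because V is the closure of the finite set -S(L) under finitely many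
   monotone maps v |-> pi(v l^e + j) >= v (a minimal bad sequence argument). *)

From HB Require Import structures.
From mathcomp Require Import all_boot all_order all_algebra.
From mathcomp Require Import ring lra zify.
From Stdlib Require Import Classical ClassicalEpsilon Wf_nat.
Set Implicit Arguments. Unset Strict Implicit. Unset Printing Implicit Defensive.
Import Order.TTheory GRing.Theory Num.Theory.

Lemma dependent_choice (X : Type) (P : X -> Prop) (R : X -> X -> Prop) x0 :
  P x0 -> (forall x, P x -> exists2 y, P y & R x y) ->
  exists f : nat -> X, f 0%N = x0 /\ forall k, P (f k) /\ R (f k) (f k.+1).
Proof.
move=> Px0 PR.
have [g Pg] : exists g : X -> X, forall x, P x -> P (g x) /\ R x (g x).
  apply: (ClassicalEpsilon.choice (fun x y => P x -> P y /\ R x y)) => x.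
  have [/PR[y Py Rxy]|nPx] := classic (P x); first by exists y.
  by exists x.
have Pf k : P (iter k g x0) by elim: k => //= k /Pg[].
exists (fun k => iter k g x0); split=> // k.
by split; [exact: Pf | case: (Pg _ (Pf k))].
Qed.

Lemma classical_ex_minn (P : nat -> Prop) :
  (exists n, P n) -> exists n, P n /\ forall m, P m -> (n <= m)%N.
Proof.
move=> exP; have [n [[Pn n_min] _]] :=
  @dec_inh_nat_subset_has_unique_least_element P (fun m => classic (P m)) exP.
by exists n; split=> // m /n_min/ssrnat.leP.
Qed.

Lemma infinitely_often_mem (X : eqType) (s : seq X) (Q : nat -> X -> Prop) :
  (forall k, exists2 x, x \in s & Q k x) ->
  exists2 x, x \in s & forall K, exists2 k, (K <= k)%N & Q k x.
Proof.
elim: s Q => [|x s IHs] Q sQ; first by have [] := sQ 0%N.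
have [often|] := classic (forall K, exists2 k, (K <= k)%N & Q k x).
  by exists x; rewrite ?mem_head.
move=> /not_all_ex_not[K0 notQx].
have [|y ys often] := IHs (fun k => Q (K0 + k)%N) => [k|].
  have [y] := sQ (K0 + k)%N; rewrite inE => /predU1P[-> Qx|ys Qy].
    by case: notQx; exists (K0 + k)%N; rewrite ?leq_addr.
  by exists y.
exists y => [|K]; first by rewrite inE ys orbT.
have [k Kk Qk] := often K; exists (K0 + k)%N => //.
exact: leq_trans Kk (leq_addl _ _).
Qed.

Lemma increasing_subsequence (Q : nat -> Prop) :
  (forall K, exists2 k, (K <= k)%N & Q k) ->
  exists g : nat -> nat, (forall j, g j < g j.+1)%N /\ forall j, Q (g j).
Proof.
move=> often; have [k0 _ Qk0] := often 0%N.
have [|g [_ hg]] := @dependent_choice _ Q (fun i j => i < j)%N _ Qk0.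
  by move=> i _; have [j ij Qj] := often i.+1; exists j.
by exists g; split=> j; case: (hg j).
Qed.

Lemma seq_argmin (I : eqType) disp (T : orderType disp) (F : I -> T) (s : seq I) i0 :
  i0 \in s -> exists2 i, i \in s & forall j, j \in s -> (F i <= F j)%O.
Proof.
move=> s_i0; have [i si Fi] : exists2 i, i \in s & \big[Order.min/F i0]_(j <- s) F j = F i.
  rewrite big_seq; elim/big_ind: _ => [|x y [i si ->] [j sj ->]|j sj]; first by exists i0.
  - by case: (leP (F i) (F j)); [exists i | exists j].
  - by exists j.
by exists i => // j sj; rewrite -Fi ge_bigmin_seq.
Qed.

Section Descending.
Context {disp : Order.disp_t} {T : orderType disp}.
Implicit Types (P S : T -> Prop) (f : nat -> T).
Local Open Scope order_scope.

Definition descending P f := forall k, P (f k) /\ f k.+1 < f k.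

Definition well_ordered P := forall f, ~ descending P f.

Lemma descending_lt P f i j : descending P f -> (i < j)%N -> f j < f i.
Proof.
move=> Pf; apply: (@homo_ltn _ f (fun x y => y < x)) => [y x z yx zy|k].
  exact: lt_trans zy yx.
exact: (Pf k).2.
Qed.

Lemma well_ordered_min P S : well_ordered P -> (forall x, S x -> P x) ->
  (exists x, S x) -> exists2 m, S m & forall x, S x -> m <= x.
Proof.
move=> woP SP [x0 Sx0]; apply: NNPP => nomin.
have [|f [_ Sf]] := @dependent_choice _ S (fun x y => y < x) _ Sx0.
  move=> x Sx; apply: NNPP => nolt; apply: nomin; exists x => // y Sy.
  by rewrite leNgt; apply/negP => yx; apply: nolt; exists y.
by apply: (woP f) => k; have [/SP] := Sf k.
Qed.

Lemma well_ordered_seq P (s : seq T) : (forall x, P x -> x \in s) -> well_ordered P.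
Proof.
move=> Ps f Pf.
have [|x _ often] := @infinitely_often_mem _ s (fun k x => f k = x).
  by move=> k; exists (f k); first exact/Ps/(Pf k).1.
have [i _ fi] := often 0%N; have [j ij fj] := often i.+1.
by have := descending_lt Pf ij; rewrite fi fj ltxx.
Qed.

End Descending.

Section MonotoneClosure.
Context {disp : Order.disp_t} {T : orderType disp} {I : eqType}.
Variables (V0 : T -> Prop) (s : seq I) (F : I -> T -> T).
Hypothesis F_ge : forall i x, i \in s -> (x <= F i x)%O.
Hypothesis F_homo : forall i x y, i \in s -> (x <= y)%O -> (F i x <= F i y)%O.
Local Open Scope order_scope.

Fixpoint closure_rank (k : nat) (x : T) : Prop :=
  if k is k'.+1 then exists y, closure_rank k' y /\ exists2 i, i \in s & x = F i y
  else V0 x.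

Definition in_closure (x : T) : Prop := exists k, closure_rank k x.

Let bad x := exists f, f 0%N = x /\ descending in_closure f.

Let lower_rank c p := exists r, closure_rank r p /\
  forall y r', bad y -> y < c -> closure_rank r' y -> (r < r')%N.

Let bad_of_min_rank_below c y := y < c /\ exists r, closure_rank r y /\
  forall y' r', bad y' -> y' < c -> closure_rank r' y' -> (r <= r')%N.

Let exists_bad_of_min_rank_below c : bad c -> exists2 y, bad y & bad_of_min_rank_below c y.
Proof.
move=> [f [<- clf]].
have [|r [[y [[bad_y ylt] ry]] r_min]] :=
  @classical_ex_minn (fun r => exists y, (bad y /\ y < f 0%N) /\ closure_rank r y).
  have [[r rf1] _] := clf 1%N; exists r, (f 1%N); split=> //; split.
    by exists (fun k => f k.+1); split=> // k; exact: clf.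
  by case: (clf 0%N).
exists y => //; split=> //; exists r; split=> // y' r' ? ? ?.
by apply: r_min; exists y'.
Qed.

Let origin c y (o : option I) := match o with
  | None => V0 y
  | Some i => exists p, y = F i p /\ lower_rank c p
  end.

Let exists_origin c y : bad_of_min_rank_below c y ->
  exists2 o, o \in None :: map Some s & origin c y o.
Proof.
move=> [_ [[|r] [ry r_min]]]; first by exists None; rewrite ?mem_head.
have [p [rp [i si ->]]] := ry.
exists (Some i); first by rewrite inE map_f.
by exists p; split=> //; exists r; split.
Qed.

(* Minimal bad sequence: each c (k+1) is a bad element below c k of least rank.  Infinitely
   many c (k+1) share an origin, which cannot be V0; so c (k+1) = F i (p k) along a
   subsequence, and the p k form a bad sequence below the first c k of too small a rank. *)
Theorem closure_well_ordered : well_ordered V0 -> well_ordered in_closure.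
Proof.
move=> woV0 f clf.
have [|c [_ badc]] :=
  @dependent_choice _ bad bad_of_min_rank_below (f 0%N) _ exists_bad_of_min_rank_below.
  by exists f.
have c_lt : descending bad c by move=> k; have [? []] := badc k.
have [|o os often] :=
    @infinitely_often_mem _ (None :: map Some s) (fun k => origin (c k) (c k.+1)).
  by move=> k; apply: exists_origin; case: (badc k).
have {often}[g [g_incr g_o]] := increasing_subsequence often.
have cg_lt j : c (g j.+1).+1 < c (g j).+1 by apply: descending_lt c_lt _; rewrite ltnS.
case: o os g_o => [i|] /= os g_o; last first.
  by apply: (woV0 (fun j => c (g j).+1)) => j; split.
have {os}si : i \in s by move: os; rewrite inE /= mem_map //; exact: Some_inj.
have [p p_spec] := ClassicalEpsilon.choice _ g_o.
have p_desc : descending in_closure p.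
  move=> j; have [_ [r [rp _]]] := p_spec j; split; first by exists r.
  rewrite ltNge; apply/negP => /(F_homo si).
  by rewrite -(p_spec j).1 -(p_spec j.+1).1 leNgt cg_lt.
have [c1 [r [rp r_min]]] := p_spec 0%N.
suff /(r_min _ r (ex_intro _ p (conj erefl p_desc)))/(_ rp) : p 0%N < c (g 0%N).
  by rewrite ltnn.
by apply: le_lt_trans (F_ge _ si) _; rewrite -c1; case: (c_lt (g 0%N)).
Qed.

End MonotoneClosure.

Local Open Scope ring_scope.

Section NewtonPolygon.
Variables (K : fieldType) (l n : nat) (a : nat -> {poly K}).
Hypothesis l_gt1 : (1 < l)%N.
Hypothesis a0_neq0 : a 0%N != 0.

Local Notation lpow i := (((l ^ i)%N)%:R : rat).
Local Notation pv i := ((pval (a i))%:R : rat).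

Lemma lpow_gt0 i : 0 < lpow i.
Proof. by rewrite ltr0n expn_gt0 (ltnW l_gt1). Qed.

Lemma lpow_lt i k : (i < k)%N -> lpow i < lpow k.
Proof. by move=> ik; rewrite ltr_nat ltn_exp2l. Qed.

Lemma lpow_double i k : (i < k)%N -> 2 * lpow i <= lpow k.
Proof.
move=> ik; rewrite -natrM ler_nat -(subnKC ik) expnD expnS -[X in (X <= _)%N]muln1.
by rewrite leq_mul ?leq_mul2r ?l_gt1 ?orbT // expn_gt0 (ltnW l_gt1).
Qed.

Lemma pval_coef_neq0 (p : {poly K}) : p != 0 -> p`_(pval p) != 0.
Proof.
move=> p_neq0; suff /(nth_find 0) : has (fun c => c != 0) p by [].
apply/hasP; exists (lead_coef p); last by rewrite lead_coef_eq0.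
by rewrite lead_coefE mem_nth // ltn_predL size_poly_gt0.
Qed.

Lemma pval_le (p : {poly K}) j : p`_j != 0 -> (pval p <= j)%N.
Proof. by move=> pj; rewrite leqNgt; apply/negP => /(before_find 0); rewrite pj. Qed.

Lemma mem_Pseq i j : ((i, j) \in Pseq n a) = inP n a i j.
Proof.
apply/flattenP/andP => [[_ /mapP[i' + ->] /mapP[j' + [-> ->]]]|[i_le aij]].
  by rewrite mem_iota mem_filter => /andP[_ ?] /andP[].
exists [seq (i, j') | j' <- iota 0 (size (a i)) & (a i)`_j' != 0].
  by apply/mapP; exists i; rewrite ?mem_iota.
apply: map_f; rewrite mem_filter aij mem_iota /= ltnNge.
by apply: contra aij => /(nth_default 0) ->.
Qed.

Lemma inP_le i j : inP n a i j -> (i <= n)%N.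
Proof. by case/andP. Qed.

Lemma inP_neq0 i j : inP n a i j -> a i != 0.
Proof. by case/andP => _; apply: contraNneq => ->; rewrite coef0. Qed.

Lemma inP_pval i : (i <= n)%N -> a i != 0 -> inP n a i (pval (a i)).
Proof. by move=> i_le ai; rewrite /inP i_le pval_coef_neq0. Qed.

Lemma pval_le_inP i j : inP n a i j -> (pval (a i) <= j)%N.
Proof. by case/andP => _; apply: pval_le. Qed.

Lemma piL_bigmax q : piL l n a q =
  \big[Num.max/q - (pval (a 0%N))%:R]_(p <- Pseq n a) ((q - (p.2)%:R) / lpow p.1).
Proof. by rewrite /piL; elim: (Pseq n a) => [|p s /= ->]; rewrite ?big_nil ?big_cons // maxC. Qed.

Lemma piL_ge q i j : inP n a i j -> (q - j%:R) / lpow i <= piL l n a q.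
Proof.
rewrite piL_bigmax -mem_Pseq => ij.
exact: (le_bigmax_seq _ _ _ (fun p : nat * nat => (q - (p.2)%:R) / lpow p.1) ij).
Qed.

Lemma piL_le q y : (forall i j, inP n a i j -> (q - j%:R) / lpow i <= y) ->
  piL l n a q <= y.
Proof.
move=> le_y; rewrite piL_bigmax big_seq; apply: bigmax_le => [|[i j]].
  by have := le_y _ _ (inP_pval (leq0n n) a0_neq0); rewrite expn0 divr1.
by rewrite mem_Pseq; apply: le_y.
Qed.

Lemma piL_attained q : exists i j, inP n a i j /\ piL l n a q = (q - j%:R) / lpow i.
Proof.
rewrite piL_bigmax big_seq; elim/big_ind: _ => [|x y [i [j [ij ->]]] [i' [j' [ij' ->]]]|[i j]].
- by exists 0%N, (pval (a 0%N)); rewrite expn0 divr1 inP_pval.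
- by case: (leP ((q - j%:R) / lpow i) ((q - j'%:R) / lpow i')); [exists i', j'|exists i, j].
- by rewrite mem_Pseq => ij; exists i, j.
Qed.

Lemma piL_homo q q' : q <= q' -> piL l n a q <= piL l n a q'.
Proof.
move=> qq'; apply: piL_le => i j /(piL_ge q'); apply: le_trans.
by rewrite ler_pM2r ?invr_gt0 ?lpow_gt0 // lerD2r.
Qed.

(* pi(Psi(v)) = [seq piPsi p v | p <- Pseq n a]. *)
Definition piPsi (p : nat * nat) (v : rat) : rat := piL l n a (v * lpow p.1 + (p.2)%:R).

Lemma piPsi_ge p v : p \in Pseq n a -> v <= piPsi p v.
Proof.
case: p => i j; rewrite mem_Pseq => /(piL_ge (v * lpow i + j%:R)).
by rewrite addrK mulfK // gt_eqF ?lpow_gt0.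
Qed.

Lemma piPsi_homo p v w : v <= w -> piPsi p v <= piPsi p w.
Proof. by move=> vw; rewrite piL_homo // lerD2r ler_pM2r ?lpow_gt0. Qed.

Lemma piPsi_fixpoint v : exists2 p, p \in Pseq n a & piPsi p v = v.
Proof.
have [|[i j] ij ij_min] :=
  @seq_argmin _ _ _ (fun p => v * lpow p.1 + (p.2)%:R) (Pseq n a) (0%N, pval (a 0%N)).
  by rewrite mem_Pseq inP_pval.
exists (i, j) => //; apply/le_anti; rewrite piPsi_ge // andbT; apply: piL_le => i' j' ij'.
rewrite ler_pdivrMr ?lpow_gt0 // lerBlDr; apply: (ij_min (i', j')).
by rewrite mem_Pseq.
Qed.

Lemma inVi_closure_rank k w :
  inVi l n a k w <-> closure_rank (fun w => isSlope l n a (- w)) (Pseq n a) piPsi k w.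
Proof.
elim: k w => [|k IHk] w /=; first by [].
split.
  by move=> [v [/IHk vk [e [j [ej ->]]]]]; exists v; split=> //; exists (e, j); rewrite ?mem_Pseq.
by move=> [v [/IHk vk [[e j] ej ->]]]; exists v; split=> //; exists e, j; rewrite -mem_Pseq.
Qed.

Lemma inVi_succ k v : inVi l n a k v -> inVi l n a k.+1 v.
Proof.
move=> vk; have [[e j] ej ev] := piPsi_fixpoint v.
by exists v; split=> //; exists e, j; rewrite -mem_Pseq -[in LHS]ev.
Qed.

Lemma inVi_homo k k' v : (k <= k')%N -> inVi l n a k v -> inVi l n a k' v.
Proof.
move=> /subnKC <- vk; elim: (k' - k)%N => [|m IHm]; rewrite ?addn0 ?addnS //.
exact: inVi_succ.
Qed.

Lemma inV_piPsi v p : inV l n a v -> p \in Pseq n a -> inV l n a (piPsi p v).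
Proof. by case: p => e j [k vk] ej; exists k.+1, v; split=> //; exists e, j; rewrite -mem_Pseq. Qed.

Definition chord_slope i k : rat := (pv k - pv i) / (lpow k - lpow i).

Lemma le_chord_slope s i k : (i < k)%N ->
  (s <= chord_slope i k) = (pv i - s * lpow i <= pv k - s * lpow k).
Proof.
move=> ik; rewrite ler_pdivlMr ?subr_gt0 ?lpow_lt //.
by apply/idP/idP => h; lra.
Qed.

Lemma isSlope_chord mu : isSlope l n a mu ->
  exists i k, [/\ (i < k)%N, (k <= n)%N & mu = chord_slope i k].
Proof.
move=> [i [k [ik kn _ eq_ik _]]]; exists i, k; split=> //.
have D : lpow k - lpow i != 0 by rewrite subr_eq0 gt_eqF ?lpow_lt.
by apply: (canRL (mulfK D)); rewrite mulrBr; lra.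
Qed.

Lemma slopes_well_ordered : well_ordered (fun w => isSlope l n a (- w)).
Proof.
pose ik := [seq (i, k) | i <- iota 0 n.+1, k <- iota 0 n.+1].
apply: (@well_ordered_seq _ _ _ [seq - chord_slope p.1 p.2 | p <- ik]).
move=> w /isSlope_chord[i [k [ik_lt kn /eqP]]]; rewrite eqr_oppLR => /eqP ->.
apply/mapP; exists (i, k) => //.
by apply/allpairsP; exists (i, k); rewrite !mem_iota /=; split=> //; lia.
Qed.

Theorem inV_well_ordered : well_ordered (inV l n a).
Proof.
move=> f Vf; have woV := closure_well_ordered piPsi_ge
  (fun p v w _ => @piPsi_homo p v w) slopes_well_ordered.
apply: (woV f) => k; have [[r /inVi_closure_rank fr] ?] := Vf k.
by split=> //; exists r.
Qed.

Lemma slope_right_of_vertex w i k : (i < k)%N -> (k <= n)%N -> a i != 0 -> a k != 0 ->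
  (forall m, (m <= n)%N -> a m != 0 -> w * lpow i + pv i <= w * lpow m + pv m) ->
  exists2 s, isSlope l n a s & - s <= w /\ s <= chord_slope i k.
Proof.
move=> ik kn ai ak i_min.
pose right := [seq m <- iota i.+1 (n - i) | a m != 0].
have mem_right m : (m \in right) = [&& (i < m)%N, (m <= n)%N & a m != 0].
  have iota_end : (i.+1 + (n - i) = n.+1)%N by lia.
  by rewrite mem_filter mem_iota iota_end ltnS andbC -andbA.
have [|m mr m_min] := @seq_argmin _ _ _ (chord_slope i) right k.
  by rewrite mem_right ik kn ak.
move: mr; rewrite mem_right => /and3P[im mn am].
have w_le : - w <= chord_slope i m.
  by rewrite le_chord_slope //; have := i_min _ mn am; lra.
exists (chord_slope i m).
  exists i, m; split=> //.
    by rewrite /chord_slope; field; rewrite subr_eq0 gt_eqF ?lpow_lt.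
  move=> m' m'n am'; case: (ltngtP m' i) => [m'i|im'|->] //.
    have := i_min _ m'n am'; have := lpow_lt m'i; move: w_le.
    set s := chord_slope i m; nra.
  by rewrite -le_chord_slope //; apply: m_min; rewrite mem_right im' m'n am'.
split; first by rewrite lerNl.
by apply: m_min; rewrite mem_right ik kn ak.
Qed.

Lemma piPsi_attained v e j : exists e' j', [/\ inP n a e' j',
  piPsi (e, j) v * lpow e' + j'%:R = v * lpow e + j%:R &
  forall i k, inP n a i k -> piPsi (e, j) v * lpow e' + j'%:R <= piPsi (e, j) v * lpow i + k%:R].
Proof.
have [e' [j' [e'j' wE]]] := piL_attained (v * lpow e + j%:R).
have wE' : piPsi (e, j) v * lpow e' + j'%:R = v * lpow e + j%:R.
  by rewrite /piPsi wE divfK ?subrK // gt_eqF ?lpow_gt0.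
exists e', j'; split=> // i k /(piL_ge (v * lpow e + j%:R)).
by rewrite -/(piPsi (e, j) v) wE' ler_pdivrMr ?lpow_gt0 // lerBlDr.
Qed.

End NewtonPolygon.

Section Grid.
Variables (d l : nat).
Hypotheses (d_gt0 : (0 < d)%N) (l_gt0 : (0 < l)%N).

Local Notation lpow i := (((l ^ i)%N)%:R : rat).

Lemma inZi_homo i i' x : (i <= i')%N -> inZi d l i x -> inZi d l i' x.
Proof.
by move=> /subnKC <- xi; rewrite /inZi expnD mulnA natrM mulrA rpredM ?rpred_nat.
Qed.

Lemma inZi_sub i x y : inZi d l i x -> inZi d l i y -> inZi d l i (x - y).
Proof. by rewrite /inZi mulrBl; apply: rpredB. Qed.

Lemma inZi_affine i p q x j k : inZi d l i x ->
  inZi d l (i - p + q) ((x * lpow p + j%:R - k%:R) / lpow q).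
Proof.
rewrite /inZi => xi.
have lpowE : (d * l ^ i)%N%:R * lpow (p - i) = (d * l ^ (i - p))%N%:R * lpow p :> rat.
  by rewrite -!natrM -!mulnA -!expnD; congr (_ * _ ^ _)%:R; lia.
have -> : (x * lpow p + j%:R - k%:R) / lpow q * (d * l ^ (i - p + q))%N%:R =
    x * (d * l ^ i)%N%:R * lpow (p - i) + (j%:R - k%:R) * (d * l ^ (i - p))%N%:R.
  rewrite -[in RHS]mulrA lpowE expnD !natrM; field.
  by rewrite pnatr_eq0 -lt0n expn_gt0 l_gt0.
by rewrite rpredD ?(rpredM xi) ?rpredM ?rpredB ?rpred_nat.
Qed.

Lemma inZi_ge i x : inZi d l i x -> 0 < x -> ((d * l ^ i)%N%:R)^-1 <= x.
Proof.
move=> xi x_gt0.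
have N_gt0 : 0 < ((d * l ^ i)%N%:R : rat) by rewrite ltr0n muln_gt0 d_gt0 expn_gt0 l_gt0.
have := norm_intr_ge1 xi (mulf_neq0 (lt0r_neq0 x_gt0) (lt0r_neq0 N_gt0)).
by rewrite -div1r ler_pdivrMr // ger0_norm // mulr_ge0 // ltW.
Qed.

Lemma isH_exists v : inZdl d l v -> exists h, isH d l v h.
Proof.
move=> vZ; case: (ex_minnP vZ) => h vh h_min; exists h; split=> // i ih.
by apply/negP => /h_min; rewrite leqNgt ih.
Qed.

Lemma isH_min v h i : isH d l v h -> inZi d l i v -> (h <= i)%N.
Proof. by case=> _ h_min vi; rewrite leqNgt; apply/negP => /h_min; rewrite vi. Qed.

Lemma isH_unique v h h' : isH d l v h -> isH d l v h' -> h = h'.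
Proof. by move=> vh vh'; apply/eqP; rewrite eqn_leq (isH_min vh vh'.1) (isH_min vh' vh.1). Qed.

End Grid.

Section ValueSetBounds.
Variables (K : fieldType) (l n : nat) (a : nat -> {poly K}) (d : nat).
Hypotheses (l_gt1 : (1 < l)%N) (a0_neq0 : a 0%N != 0) (d_gt0 : (0 < d)%N).
Hypothesis slope_den : forall mu, isSlope l n a mu -> (denq mu %| d%:Z)%Z.
Variables (muk tau : rat).
Hypotheses (muk_max : isMaxSlope l n a muk) (tau_spec : isTau l n a d tau).

Local Notation lpow i := (((l ^ i)%N)%:R : rat).
Let l_gt0 : (0 < l)%N := ltnW l_gt1.

Lemma slope_inZ0 mu : isSlope l n a mu -> inZi d l 0 (- mu).
Proof.
move=> /slope_den /dvdzP[k dk]; rewrite /inZi expn0 muln1.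
apply/intrP; exists (- (k * numq mu)).
have -> : (d%:R : rat) = (d%:Z)%:~R by [].
by rewrite dk intrN !intrM numqE; ring.
Qed.

Lemma inVi_ge k v : inVi l n a k v -> - muk <= v.
Proof.
elim: k v => [|k IHk] v /=; first by move=> /muk_max.2; rewrite lerNl.
move=> [v' [/IHk v'_ge [e [j [ej ->]]]]]; apply: le_trans v'_ge _.
by apply: (@piPsi_ge _ _ _ _ l_gt1 (e, j)); rewrite mem_Pseq.
Qed.

Lemma inV_ge v : inV l n a v -> - muk <= v.
Proof. by move=> [k]; apply: inVi_ge. Qed.

Lemma inVi_inZdl k v : inVi l n a k v -> inZdl d l v.
Proof.
elim: k v => [|k IHk] v /=; first by move=> /slope_inZ0; rewrite opprK; exists 0%N.
move=> [v' [/IHk [i v'i] [e [j [_ ->]]]]].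
have [e' [j' [_ ->]]] := piL_attained l n a0_neq0 (v' * lpow e + j%:R).
by exists (i - e + e')%N; apply: inZi_affine.
Qed.

Lemma inV_inZdl v : inV l n a v -> inZdl d l v.
Proof. by move=> [k]; apply: inVi_inZdl. Qed.

Lemma tau_gt0 : 0 < tau.
Proof.
case: tau_spec => _ _ [->|[mu [w [_ [_ ? _] ->]]]]; last by lra.
by rewrite invr_gt0 ltr0n muln_gt0 d_gt0 expn_gt0 l_gt0.
Qed.

Lemma tau_le_inZn x : inZi d l n x -> 0 < x -> tau <= x.
Proof. by move=> xn /(inZi_ge d_gt0 l_gt0 xn); apply: le_trans; case: tau_spec. Qed.

Lemma tau_le_gap_above_slope mu u :
  isSlope l n a mu -> inV l n a u -> - mu < u -> - mu + tau <= u.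
Proof.
move=> mu_slope uV mu_u.
have [|m [mV mu_m] m_min] := @well_ordered_min _ _ _ (fun x => inV l n a x /\ - mu < x)
    (inV_well_ordered l_gt1 a0_neq0) (fun x => @proj1 _ _).
  by exists u.
have m_next : nextV l n a (- mu) m by split=> // x xV mu_x; apply: m_min.
have tau_le : tau <= m + mu by case: tau_spec => _ /(_ mu m mu_slope m_next).
by have := m_min u (conj uV mu_u); lra.
Qed.

Lemma tau_le_step_along_slope v w e j e' j' :
  inV l n a v -> inV l n a w -> v < w -> ~~ inZi d l 0 v -> ~~ inZi d l 0 w ->
  inP n a e j -> inP n a e' j' -> (e' < e)%N ->
  w * lpow e' + j'%:R = v * lpow e + j%:R ->
  (forall i k, inP n a i k -> w * lpow e' + j'%:R <= w * lpow i + k%:R) ->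
  tau <= w - v.
Proof.
move=> vV wV vw v0 w0 ej e'j' e'e wE w_min.
have e'_pval m : (m <= n)%N -> a m != 0 -> w * lpow e' + j'%:R <= w * lpow m + (pval (a m))%:R.
  by move=> mn am; apply/w_min/inP_pval.
have j'E : j' = pval (a e').
  apply/eqP; rewrite eqn_leq (pval_le_inP e'j') andbT -(ler_nat rat) -(lerD2l (w * lpow e')).
  by apply: e'_pval; [apply: inP_le e'j' | apply: inP_neq0 e'j'].
subst j'.
have [s s_slope [s_w s_chord]] := slope_right_of_vertex l_gt1 a0_neq0 e'e (inP_le ej)
  (inP_neq0 e'j') (inP_neq0 ej) e'_pval.
have s_j : s * (lpow e - lpow e') <= j%:R - (pval (a e'))%:R.
  move: s_chord; rewrite le_chord_slope //; have := pval_le_inP ej.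
  by rewrite -(ler_nat rat); lra.
have neq_s x : ~~ inZi d l 0 x -> x != - s by apply: contraNneq => ->; apply: slope_inZ0.
case: (ltgtP v (- s)) => [v_s | s_v | v_s]; last by move: (neq_s _ v0); rewrite v_s eqxx.
  have s_w' : - s < w by rewrite lt_neqAle eq_sym neq_s.
  by have := tau_le_gap_above_slope s_slope wV s_w'; lra.
have s_tau := tau_le_gap_above_slope s_slope vV s_v.
have e'_gt0 := lpow_gt0 l_gt1 e'.
suff : (v + s) * lpow e' <= (w - v) * lpow e' by rewrite ler_pM2r //; lra.
have : (v + s) * lpow e' <= (v + s) * (lpow e - lpow e').
  by rewrite ler_wpM2l; have := lpow_double l_gt1 e'e; lra.
lra.
Qed.

Lemma piPsi_step_progress v e j hv hw : inV l n a v -> inP n a e j ->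
  v < piPsi l n a (e, j) v -> isH d l v hv -> isH d l (piPsi l n a (e, j) v) hw ->
  (hv <= hw + n)%N /\ ((hv < hw)%N \/ tau <= piPsi l n a (e, j) v - v).
Proof.
set w := piPsi l n a (e, j) v => vV ej vw vh wh.
have wV : inV l n a w by apply: inV_piPsi; rewrite ?mem_Pseq.
have [e' [j' [e'j' wE w_min]]] := piPsi_attained n l_gt1 a0_neq0 v e j.
rewrite -/w in wE w_min.
have hv_le : (hv <= hw - e' + e)%N.
  apply: (isH_min vh); have -> : v = (w * lpow e' + j'%:R - j%:R) / lpow e.
    by rewrite wE addrK mulfK // gt_eqF // lpow_gt0.
  by apply: inZi_affine => //; case: wh.
have en := inP_le ej; split; first by lia.
case: (ltnP hv hw) => [|hw_hv]; [by left | right].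
have wv_gt0 : 0 < w - v by rewrite subr_gt0.
case: (leqP hv n) => [hv_n | n_hv].
  apply: tau_le_inZn => //; apply: inZi_sub.
    by apply: (inZi_homo (leq_trans hw_hv hv_n)); case: wh.
  by apply: (inZi_homo hv_n); case: vh.
have: (e' <= e)%N by lia.
rewrite leq_eqVlt => /predU1P[e'E | e'e]; last first.
  apply: (tau_le_step_along_slope vV wV vw _ _ ej e'j' e'e wE w_min).
    by apply/negP => /(isH_min vh); lia.
  by apply/negP => /(isH_min wh) hw0; lia.
subst e'; apply: tau_le_inZn => //.
have -> : w - v = (j%:R - j'%:R) / lpow e.
  by apply: (canRL (mulfK (lt0r_neq0 (lpow_gt0 l_gt1 e)))); lra.
apply: (inZi_homo en).
by rewrite /inZi natrM mulrCA divfK ?gt_eqF ?lpow_gt0 // rpredM ?rpredB ?rpred_nat.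
Qed.

Definition index_bound v h : rat := n.+1%:R * ((v + muk) / tau) + h%:R.

Lemma index_bound_ge0 (v : rat) h : - muk <= v -> 0 <= index_bound v h.
Proof.
move=> muk_v; have tau_pos := tau_gt0.
by rewrite /index_bound addr_ge0 ?mulr_ge0 ?divr_ge0 ?ler0n ?invr_ge0 ?(ltW tau_pos) //; lra.
Qed.

Lemma index_bound_piPsi_step v e j hv hw : inV l n a v -> inP n a e j ->
  v < piPsi l n a (e, j) v -> isH d l v hv -> isH d l (piPsi l n a (e, j) v) hw ->
  index_bound v hv + 1 <= index_bound (piPsi l n a (e, j) v) hw.
Proof.
set w := piPsi l n a (e, j) v => vV ej vw vh wh.
have [hv_le step] := piPsi_step_progress vV ej vw vh wh.
have tau_pos := tau_gt0.
have diff : (w + muk) / tau - (v + muk) / tau = (w - v) / tau by field; rewrite gt_eqF.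
rewrite /index_bound; set X := (v + muk) / tau in diff *; set Y := (w + muk) / tau in diff *.
case: step => [hv_hw | tau_le].
  have : hv.+1%:R <= hw%:R :> rat by rewrite ler_nat.
  have : 0 <= n.+1%:R * (Y - X) by rewrite diff mulr_ge0 // divr_ge0 // ltW // subr_gt0.
  by rewrite -natr1; lra.
have : hv%:R <= hw%:R + n%:R :> rat by rewrite -natrD ler_nat.
have : n.+1%:R <= n.+1%:R * (Y - X).
  by rewrite diff -{1}[n.+1%:R]mulr1 ler_wpM2l // ler_pdivlMr // mul1r.
by rewrite -natr1; lra.
Qed.

Lemma inVi_index_bound r v h : inVi l n a r v -> isH d l v h ->
  exists m, inVi l n a m v /\ m%:R <= index_bound v h.
Proof.
elim: r v h => [|r IHr] v h vr vh.
  by exists 0%N; split=> //; rewrite index_bound_ge0 // (inVi_ge vr).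
have [v' [v'r [e [j [ej vE]]]]] := vr.
have v'V : inV l n a v' by exists r.
have [h' v'h] := isH_exists (inV_inZdl v'V).
have [m [v'm m_le]] := IHr _ _ v'r v'h.
have : v' <= v by rewrite vE; apply: (@piPsi_ge _ _ _ _ l_gt1 (e, j)); rewrite mem_Pseq.
rewrite le_eqVlt => /predU1P[v'v | v'v].
  by rewrite -v'v in vh *; rewrite (isH_unique vh v'h); exists m.
rewrite vE -/(piPsi l n a (e, j) v') in v'v vh *.
have := index_bound_piPsi_step v'V ej v'v v'h vh.
exists m.+1; split; first by exists v'; split=> //; exists e, j.
by rewrite -natr1; lra.
Qed.

Lemma inV_index_bound v : inV l n a v ->
  exists h k : nat, [/\ isH d l v h, Num.floor (index_bound v h) = k%:Z & inVi l n a k v].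
Proof.
move=> vV; have [h vh] := isH_exists (inV_inZdl vV).
have [r vr] := vV; have [m [vm m_le]] := inVi_index_bound vr vh.
have floor_ge0 : 0 <= Num.floor (index_bound v h).
  by rewrite floor_ge0 index_bound_ge0 // inV_ge.
exists h, `|Num.floor (index_bound v h)|%N; split; rewrite ?gez0_abs //.
by apply: (inVi_homo l_gt1 a0_neq0 _ vm); rewrite -lez_nat gez0_abs // floor_ge_int.
Qed.

End ValueSetBounds.

Theorem mainTheorem11 (K : fieldType) (l n : nat) (a : nat -> {poly K}) (d : nat) :
  (2 <= l)%N -> (1 <= n)%N -> a 0%N != 0 -> a n != 0 -> (1 <= d)%N ->
  (forall mu : rat, isSlope l n a mu -> (denq mu %| d%:Z)%Z) ->
  forall muk : rat, isMaxSlope l n a muk ->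
  forall tau : rat, isTau l n a d tau ->
  forall v : rat,
    inV l n a v <->
    [/\ inZdl d l v, - muk <= v &
        exists h k : nat, [/\ isH d l v h,
          Num.floor (n.+1%:R * ((v + muk) / tau) + h%:R) = k%:Z &
          inVi l n a k v]].
Proof.
move=> l_gt1 _ a0_neq0 _ d_gt0 slope_den muk muk_max tau tau_spec v.
split=> [vV | [_ _ [h [k [_ _ vk]]]]]; last by exists k.
by split; [apply: inV_inZdl vV | apply: inV_ge vV | apply: inV_index_bound vV].
Qed.
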